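(* Let $q\in\mathbb{N}_+$, let $p\ge 7$ be prime, $n\ge 2$, and let $\sigma\in\{2,3\}^{n-1}$ satisfy $\sum_{i=1}^{n-1}\sigma_i^q = p^q-1$ and $\|k\sigma\bmod p\|_q>\|\sigma\bmod p\|_q$ for every integer $k\not\equiv 0,\pm1\pmod p$; if $q\ge2$ assume moreover $4n-3>2p$. Let $\vec u=(1,\sigma)$, $W_i=p\vec e_i\in\mathbb{R}^n$, $\mathcal{L}_+=\operatorname{span}_{\mathbb{Z}}(W_1,\dots,W_n,\vec u)$, and let $R>p$ be a real number with $\mathcal{L}_+\cap\mathcal{B}_q(R) = \{\vec 0,\pm W_1,\dots,\pm W_n,\pm\vec u\}$. Let $\varepsilon>0$ satisfy $\varepsilon<\frac{R-p}{2}$ and $\varepsilon^q < \frac{p^q(R^q-p^q)}{((n-1)(p-1)+1)^q}$. Define in $\mathbb{R}^{n+1}$: $$\vec v_1=(W_1,\varepsilon),\quad \vec v_i=(W_i,2\varepsilon)\ (2\le i\le n),\quad \tilde{\vec u} = \tfrac1p\sum_{i=1}^n u_i\vec v_i = \Big(\vec u,\ \tfrac{2\sum_{i=1}^{n-1}\sigma_i+1}{p}\varepsilon\Big),$$ let $\tilde{\mathcal{L}}=\operatorname{span}_{\mathbb{Z}}(\vec v_1,\dots,\vec v_n,\tilde{\vec u})$ and $\mathcal{S}=\{\vec 0,\pm\vec v_1,\dots,\pm\vec v_n,\pm\tilde{\vec u}\}$. Then $\tilde{\mathcal{L}}$ is a lattice of rank $n$, $\tilde{\mathcal{L}}\cap\mathcal{B}_q(R)=\mathcal{S}$,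 and $\pm\vec v_1$ are the only shortest nonzero vectors of $\tilde{\mathcal{L}}$ (in $\ell^q$-norm).
   Context: $\|\vec x\|_q=(\sum_i|x_i|^q)^{1/q}$, $\mathcal{B}_q(r)=\{\vec x:\|\vec x\|_q<r\}$ (in the appropriate dimension). For real $\alpha$, $|\alpha|_p=\min_{z\in\mathbb{Z}}|\alpha-zp|$ and $\|\vec x\bmod p\|_q=(\sum_i|x_i|_p^q)^{1/q}$. $\vec e_i$ is the $i$-th standard unit vector; $(W_i,\varepsilon)$ denotes the vector of $\mathbb{R}^{n+1}$ obtained by appending the coordinate $\varepsilon$ to $W_i$. Such an $R$ exists since $\mathcal{L}_+$ is discrete and its nonzero vectors of norm $\le p$ are exactly $\pm W_i,\pm\vec u$. *)

From HB Require Import structures.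
From mathcomp Require Import all_boot all_order all_algebra.
From mathcomp Require Import all_classical all_reals all_analysis.
Set Implicit Arguments. Unset Strict Implicit. Unset Printing Implicit Defensive.
Import Order.TTheory GRing.Theory Num.Theory.
Local Open Scope classical_set_scope.
Local Open Scope ring_scope.

Section Defs.
Variable R : realType.

Definition lqnormf (q : nat) (m : nat) (x : 'I_m -> R) : R :=
  (\sum_(i < m) `|x i| ^+ q) `^ (q%:R^-1).

Definition lqnorm (q : nat) (m : nat) (x : 'rV[R]_m) : R :=
  lqnormf q (fun i => x 0 i).

Definition ballq (q : nat) (m : nat) (r : R) : set 'rV[R]_m :=
  [set x | lqnorm q x < r].

Definition modabs (p : nat) (a : R) : R :=
  inf [set `|a - z%:~R * p%:R| | z in [set: int]].

Definition lqnorm_modp (q p : nat) (m : nat) (x : 'I_m -> R) : R :=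
  (\sum_(i < m) (modabs p (x i)) ^+ q) `^ (q%:R^-1).

Definition zspan (I : finType) (m : nat) (f : I -> 'rV[R]_m) : set 'rV[R]_m :=
  [set x | exists c : I -> int, x = \sum_(i : I) f i *~ c i].

Definition lin_indep (I : finType) (m : nat) (f : I -> 'rV[R]_m) : Prop :=
  forall c : I -> R, \sum_(i : I) c i *: f i = 0 -> forall i, c i = 0.

Definition lattice_of_rank (m : nat) (L : set 'rV[R]_m) (r : nat) : Prop :=
  exists B : 'I_r -> 'rV[R]_m, lin_indep B /\ L = zspan B.

Definition ext (m : nat) (W : 'rV[R]_m) (e : R) : 'rV[R]_(m + 1) :=
  row_mx W (\row_(j < 1) e).

Definition Wv (n p : nat) (i : 'I_n) : 'rV[R]_n := p%:R *: delta_mx 0 i.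

End Defs.

Definition uvec (n : nat) (sigma : 'I_n.-1 -> nat) (i : 'I_n) : nat :=
  match nat_of_ord i with
  | 0 => 1
  | k.+1 => if insub k is Some j then sigma j else 0
  end.

(** The map [x |-> (x, (x . e) / p)] with [e = (eps, 2 eps, ..., 2 eps)] sends
    [W_i] to [v_i] and [u] to [u~], so [L~] is the image of [L_+] under a linear
    injection that never shortens a vector; in particular [L~] has rank [n].
    Every vector of [L~] in the ball [B_q(R)] therefore lies above a vector of
    [L_+] in that ball, i.e. above [0], [+-W_i] or [+-u], and the smallness of
    [eps] keeps [0, +-v_i, +-u~] inside the ball. These vectors differ from
    their preimages, all of norm [p], only in the extra coordinate: [eps] for
    [v_1], [2 eps] for the other [v_i], and [(2 sum_i sigma_i + 1) eps / p > eps]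
    for [u~]; hence [+-v_1] are the shortest. *)

From HB Require Import structures.
From mathcomp Require Import all_boot all_order all_algebra.
From mathcomp Require Import all_classical all_reals all_analysis.
From mathcomp Require Import ring lra zify.
Import Order.TTheory GRing.Theory Num.Theory.
Local Open Scope classical_set_scope.
Local Open Scope ring_scope.

Set Implicit Arguments. Unset Strict Implicit.

Lemma addXn_le_exprD (R : numDomainType) (q : nat) (a b : R) :
  (0 < q)%N -> 0 <= a -> 0 <= b -> a ^+ q + b ^+ q <= (a + b) ^+ q.
Proof.
case: q => [//|q] _ a0 b0; elim: q => [|q IH]; first by rewrite !expr1.
rewrite (exprS a) (exprS b) (exprS (a + b)).
apply: le_trans (ler_wpM2l (addr_ge0 a0 b0) IH).
rewrite mulrDl !mulrDr -!addrA lerD2l addrA lerDr.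
by rewrite addr_ge0 // mulr_ge0 // exprn_ge0.
Qed.

Section LqSum.
Variables (R : realType) (q : nat).

Definition lqsum (m : nat) (x : 'rV[R]_m) : R := \sum_(i < m) `|x 0 i| ^+ q.

Lemma lqnormE m (x : 'rV[R]_m) : lqnorm q x = lqsum x `^ q%:R^-1.
Proof. by []. Qed.

Lemma lqsum_ge0 m (x : 'rV[R]_m) : 0 <= lqsum x.
Proof. by apply: sumr_ge0 => i _; rewrite exprn_ge0. Qed.

Lemma lqsumN m (x : 'rV[R]_m) : lqsum (- x) = lqsum x.
Proof. by apply: eq_bigr => i _; rewrite mxE normrN. Qed.

Lemma lqnormN m (x : 'rV[R]_m) : lqnorm q (- x) = lqnorm q x.
Proof. by rewrite !lqnormE lqsumN. Qed.

Lemma lqsum_row_mx m k (x : 'rV[R]_m) (y : 'rV[R]_k) :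
  lqsum (row_mx x y) = lqsum x + lqsum y.
Proof.
rewrite /lqsum big_split_ord /=.
by congr (_ + _); apply: eq_bigr => i _; rewrite ?row_mxEl ?row_mxEr.
Qed.

Lemma lqsum_ext m (x : 'rV[R]_m) (e : R) : lqsum (ext x e) = lqsum x + `|e| ^+ q.
Proof. by rewrite lqsum_row_mx /lqsum big_ord1 mxE. Qed.

Hypothesis q_gt0 : (0 < q)%N.

Lemma lqsum0 m : lqsum (0 : 'rV[R]_m) = 0.
Proof. by rewrite /lqsum big1 // => i _; rewrite mxE normr0 expr0n gtn_eqF. Qed.

Lemma lqsum_scale_delta m (a : R) (i : 'I_m) : lqsum (a *: delta_mx 0 i) = `|a| ^+ q.
Proof.
rewrite /lqsum (bigD1 i) //= big1 => [|j ji]; first by rewrite !mxE !eqxx mulr1 addr0.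
by rewrite !mxE (negbTE ji) mulr0 normr0 expr0n gtn_eqF.
Qed.

Let powR_qinv_mono :
  {in Num.nneg &, {mono (fun a : R => a `^ q%:R^-1) : a b / a <= b}}.
Proof. by apply/le_mono_in/gt0_ltr_powR; rewrite invr_gt0 ltr0n. Qed.

Let powR_qinvK (a : R) : 0 <= a -> (a ^+ q) `^ q%:R^-1 = a.
Proof.
move=> a0; rewrite -powR_mulrn // -powRrM mulfV ?powRr1 //.
by rewrite pnatr_eq0 -lt0n.
Qed.

Lemma lqnorm_le m k (x : 'rV[R]_m) (y : 'rV[R]_k) :
  (lqnorm q x <= lqnorm q y) = (lqsum x <= lqsum y).
Proof. by rewrite !lqnormE powR_qinv_mono ?nnegrE ?lqsum_ge0. Qed.

Lemma lqnorm_lt m k (x : 'rV[R]_m) (y : 'rV[R]_k) :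
  (lqnorm q x < lqnorm q y) = (lqsum x < lqsum y).
Proof. by rewrite !ltNge lqnorm_le. Qed.

Lemma lqnorm_ltr m (r : R) (x : 'rV[R]_m) :
  0 < r -> (lqnorm q x < r) = (lqsum x < r ^+ q).
Proof.
move=> r_gt0; rewrite lqnormE -{1}(powR_qinvK (ltW r_gt0)).
by rewrite !ltNge powR_qinv_mono //; rewrite nnegrE ?lqsum_ge0 // exprn_ge0 // ltW.
Qed.

End LqSum.

Section ZSpan.
Variables (R : realType) (I : finType) (m : nat) (f : I -> 'rV[R]_m).

Lemma zspan_gen i : zspan f (f i).
Proof.
exists (fun j => (j == i)%:Z); rewrite (bigD1 i) //= eqxx mulr1z big1 ?addr0 //.
by move=> j /negbTE ->; rewrite mulr0z.
Qed.

Lemma zspan0 : zspan f 0.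
Proof. by exists (fun _ => 0); rewrite big1 // => j _; rewrite mulr0z. Qed.

Lemma zspanN x : zspan f x -> zspan f (- x).
Proof.
case=> c ->; exists (fun j => - c j); rewrite -sumrN.
by apply: eq_bigr => j _; rewrite mulrNz.
Qed.

Lemma zspanD x y : zspan f x -> zspan f y -> zspan f (x + y).
Proof.
case=> c -> [d ->]; exists (fun j => c j + d j); rewrite -big_split.
by apply: eq_bigr => j _; rewrite mulrzDr.
Qed.

Lemma zspanMz x k : zspan f x -> zspan f (x *~ k).
Proof.
case=> c ->; exists (fun j => c j * k); rewrite mulrz_suml.
by apply: eq_bigr => j _; rewrite mulrzA.
Qed.

Lemma zspan_sum (J : finType) (P : pred J) (g : J -> 'rV[R]_m) :
  (forall j, P j -> zspan f (g j)) -> zspan f (\sum_(j | P j) g j).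
Proof. by move=> fg; apply: big_ind; [exact: zspan0 | exact: zspanD |]. Qed.

Lemma zspan_sub (J : finType) (g : J -> 'rV[R]_m) :
  (forall j, zspan f (g j)) -> zspan g `<=` zspan f.
Proof. by move=> fg _ [c ->]; apply: zspan_sum => j _; apply/zspanMz/fg. Qed.

Lemma zspan_mulmx k (A : 'M[R]_(m, k)) :
  zspan (fun i => f i *m A) = (mulmx^~ A) @` zspan f.
Proof.
have sumA c : \sum_i (f i *m A) *~ c i = (\sum_i f i *~ c i) *m A.
  rewrite mulmx_suml; apply: eq_bigr => i _.
  by rewrite -scaler_int scalemxAl scaler_int.
apply/seteqP; split => x.
  by case=> c ->; exists (\sum_i f i *~ c i); [exists c | rewrite sumA].
by case=> _ [c ->] <-; exists c; rewrite sumA.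
Qed.

End ZSpan.

Lemma lattice_of_rank_mulmx (R : realType) m k r (L : set 'rV[R]_m)
    (A : 'M[R]_(m, k)) :
  injective (fun x : 'rV[R]_m => x *m A) -> lattice_of_rank L r ->
  lattice_of_rank ((mulmx^~ A) @` L) r.
Proof.
move=> A_inj [B [B_indep ->]]; exists (fun i => B i *m A).
split; last by rewrite zspan_mulmx.
move=> d dB0; apply: B_indep; apply: A_inj; rewrite /= mul0mx -[RHS]dB0.
by rewrite mulmx_suml; apply: eq_bigr => i _; rewrite scalemxAl.
Qed.

Section GraphMx.
Variables (R : realType) (m : nat) (c : 'cV[R]_m).

Definition graph_mx : 'M[R]_(m, m + 1) := row_mx 1%:M c.

Lemma mul_graph_mx (x : 'rV[R]_m) : x *m graph_mx = row_mx x (x *m c).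
Proof. by rewrite mul_mx_row mulmx1. Qed.

Lemma graph_mx_inj : injective (fun x : 'rV[R]_m => x *m graph_mx).
Proof. by move=> x y /(congr1 lsubmx); rewrite !mul_graph_mx !row_mxKl. Qed.

Lemma lqsum_graph_mx q (x : 'rV[R]_m) :
  lqsum q (x *m graph_mx) = lqsum q x + `|(x *m c) 0 0| ^+ q.
Proof. by rewrite mul_graph_mx lqsum_row_mx /lqsum big_ord1. Qed.

Lemma graph_mx_ballq q (L S : set 'rV[R]_m) (r : R) : (0 < q)%N ->
  L `&` ballq q r = S -> (mulmx^~ graph_mx) @` S `<=` ballq q r ->
  (mulmx^~ graph_mx) @` L `&` ballq q r = (mulmx^~ graph_mx) @` S.
Proof.
move=> q_gt0 LS S_ball; apply/seteqP; split => [_ [[x Lx <-] xA_ball]|y Sy].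
  exists x => //; rewrite -LS; split => //.
  apply: le_lt_trans xA_ball; rewrite lqnorm_le // lqsum_graph_mx.
  by rewrite lerDl exprn_ge0.
split; last exact: S_ball.
by case: Sy => x Sx <-; exists x => //; rewrite -LS in Sx; case: Sx.
Qed.

End GraphMx.

Section SymGens.
Variables (R : realType) (q : nat).

Definition sym_gens (I : Type) m (f : I -> 'rV[R]_m) (g : 'rV[R]_m) : set 'rV[R]_m :=
  [set 0] `|` [set x | exists i, x = f i \/ x = - f i] `|` [set g; - g].

Lemma sym_gens_mulmx (I : Type) m k (f : I -> 'rV[R]_m) g (A : 'M[R]_(m, k)) :
  sym_gens (fun i => f i *m A) (g *m A) = (mulmx^~ A) @` sym_gens f g.
Proof.
apply/seteqP; split => x.
  case=> [[->|[i [->|->]]]|[->|->]].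
  - by exists 0; [left; left | rewrite mul0mx].
  - by exists (f i) => //; left; right; exists i; left.
  - by exists (- f i); [left; right; exists i; right | rewrite mulNmx].
  - by exists g => //; right; left.
  - by exists (- g); [right; right | rewrite mulNmx].
case=> _ [[->|[i [->|->]]]|[->|->]] <-; rewrite ?mul0mx ?mulNmx.
- by left; left.
- by left; right; exists i; left.
- by left; right; exists i; right.
- by right; left.
- by right; right.
Qed.

Hypothesis q_gt0 : (0 < q)%N.

Lemma sym_gens_ballq (I : Type) m (f : I -> 'rV[R]_m) g (r : R) :
  0 < r -> (forall i, lqsum q (f i) < r ^+ q) -> lqsum q g < r ^+ q ->
  sym_gens f g `<=` ballq q r.
Proof.
move=> r_gt0 f_lt g_lt x; rewrite /ballq /= lqnorm_ltr //.
by case=> [[->|[i [->|->]]]|[->|->]]; rewrite ?lqsum0 ?exprn_gt0 ?lqsumN.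
Qed.

Lemma graph_mx_sym_gens_ballq (I : Type) m (c : 'cV[R]_m) (L : set 'rV[R]_m)
    (f : I -> 'rV[R]_m) g (r : R) :
  0 < r -> L `&` ballq q r = sym_gens f g ->
  (forall i, lqsum q (f i *m graph_mx c) < r ^+ q) -> lqsum q (g *m graph_mx c) < r ^+ q ->
  (mulmx^~ (graph_mx c)) @` L `&` ballq q r
    = sym_gens (fun i => f i *m graph_mx c) (g *m graph_mx c).
Proof.
move=> r_gt0 LS f_lt g_lt; rewrite sym_gens_mulmx; apply: graph_mx_ballq => //.
by rewrite -sym_gens_mulmx; apply: sym_gens_ballq.
Qed.

Lemma shortest_vectors_ballq m (L S : set 'rV[R]_m) (r : R) (x0 : 'rV[R]_m) :
  L `&` ballq q r = S -> S x0 -> S (- x0) -> x0 != 0 ->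
  (forall y, S y -> y != 0 -> y != x0 -> y != - x0 -> lqnorm q x0 < lqnorm q y) ->
  [set x | L x /\ x != 0 /\ forall y, L y -> y != 0 -> lqnorm q x <= lqnorm q y]
    = [set x0; - x0].
Proof.
move=> LS Sx0 SNx0 x0_neq0 x0_shorter.
have [[Lx0 x0_ball] [LNx0 _]] : (L `&` ballq q r) x0 /\ (L `&` ballq q r) (- x0).
  by rewrite LS.
have x0_min y : L y -> y != 0 -> lqnorm q x0 <= lqnorm q y.
  move=> Ly y_neq0; have [y_ball|] := ltP (lqnorm q y) r; last exact/le_trans/ltW.
  have Sy : S y by rewrite -LS.
  have [->//|y_neq_x0] := eqVneq y x0.
  have [->|y_neq_Nx0] := eqVneq y (- x0); first by rewrite lqnormN.
  exact/ltW/x0_shorter.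
apply/seteqP; split => [x [Lx [x_neq0 x_min]]|x [->|->]].
- have x_le_x0 := x_min x0 Lx0 x0_neq0.
  have Sx : S x by rewrite -LS; split => //; apply: le_lt_trans x0_ball.
  have [->|x_neq_x0] := eqVneq x x0; first by left.
  have [->|x_neq_Nx0] := eqVneq x (- x0); first by right.
  by have := x0_shorter x Sx x_neq0 x_neq_x0 x_neq_Nx0; rewrite ltNge x_le_x0.
- by split => //; split => // y Ly y_neq0; apply: x0_min.
- split => //; split; first by rewrite oppr_eq0.
  by move=> y Ly y_neq0; rewrite lqnormN x0_min.
Qed.

Lemma sym_gens_shortest (I : Type) m (L : set 'rV[R]_m) (f : I -> 'rV[R]_m) g
    (r : R) (i0 : I) :
  L `&` ballq q r = sym_gens f g -> f i0 != 0 ->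
  (forall i, f i != f i0 -> lqnorm q (f i0) < lqnorm q (f i)) ->
  lqnorm q (f i0) < lqnorm q g ->
  [set x | L x /\ x != 0 /\ forall y, L y -> y != 0 -> lqnorm q x <= lqnorm q y]
    = [set f i0; - f i0].
Proof.
move=> LS fi0_neq0 f_gt g_gt; apply: (shortest_vectors_ballq LS) => //.
- by left; right; exists i0; left.
- by left; right; exists i0; right.
move=> y [[->|[i [->|->]]]|[->|->]]; rewrite ?eqxx // => _.
- by move=> fi_neq _; apply: f_gt.
- by move=> _; rewrite eqr_opp lqnormN; apply: f_gt.
- by rewrite lqnormN.
Qed.

End SymGens.

Lemma summx_delta_row (R : pzRingType) n (P : pred 'I_n) (x : 'I_n -> R) j :
  (\sum_(i | P i) x i *: delta_mx 0 i : 'rV[R]_n) 0 j = (P j)%:R * x j.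
Proof.
rewrite summxE big_mkcond (bigD1 j) //= big1 => [|i ij].
  by case: (P j); rewrite ?mxE ?eqxx ?mulr1 ?mul1r ?mul0r addr0.
by case: (P i); rewrite // !mxE eq_sym (negbTE ij) andbF mulr0.
Qed.

Section Wv.
Variables (R : realType) (p : nat).
Hypothesis p_gt0 : (0 < p)%N.

Let pR_neq0 : p%:R != 0 :> R.
Proof. by rewrite pnatr_eq0 -lt0n. Qed.

Lemma lqsum_Wv q n (i : 'I_n) : (0 < q)%N -> lqsum q (Wv R p i) = p%:R ^+ q.
Proof. by move=> q_gt0; rewrite lqsum_scale_delta // normr_nat. Qed.

Lemma sum_scale_Wv n (a : 'I_n -> R) : \sum_i a i *: Wv R p i = p%:R *: \row_i a i.
Proof.
rewrite [\row_i a i]row_sum_delta scaler_sumr; apply: eq_bigr => i _.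
by rewrite /Wv mxE scalerA mulrC -scalerA.
Qed.

Lemma scale_sum_Wv_mulmx n k (a : 'I_n -> R) (A : 'M[R]_(n, k)) :
  p%:R^-1 *: \sum_i a i *: (Wv R p i *m A) = (\row_i a i) *m A.
Proof.
under eq_bigr do rewrite scalemxAl.
by rewrite -mulmx_suml sum_scale_Wv scalemxAl scalerA mulVf // scale1r.
Qed.

(* The basis is [u, W_2, ..., W_n]: [W_1 = p u - sum_(i >= 2) u_i W_i]. *)
Lemma lattice_of_rank_Wv n (a : 'I_n.+1 -> nat) : a ord0 = 1%N ->
  lattice_of_rank
    (zspan (fun o => if o is Some i then Wv R p i else \row_i (a i)%:R)) n.+1.
Proof.
move=> a0; set u : 'rV[R]_n.+1 := \row_i (a i)%:R; set gens := fun o => _.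
pose B i := if i == ord0 then u else Wv R p i.
have BE (c : 'I_n.+1 -> R) :
    \sum_i c i *: B i = c ord0 *: u + p%:R *: \sum_(i | i != ord0) c i *: delta_mx 0 i.
  rewrite (bigD1 ord0) //= scaler_sumr; congr (_ + _); apply: eq_bigr => i /negbTE i0.
  by rewrite /B i0 /Wv scalerA mulrC -scalerA.
exists B; split.
  move=> c cB0; have coord j : c ord0 * (a j)%:R + p%:R * ((j != ord0)%:R * c j) = 0.
    by move/rowP/(_ j): cB0; rewrite BE !mxE summx_delta_row.
  have c0 : c ord0 = 0 by have := coord ord0; rewrite a0 eqxx /= mul0r mulr0 mulr1 addr0.
  move=> i; have [->//|i0] := eqVneq i ord0.
  by move/eqP: (coord i); rewrite c0 mul0r add0r i0 mul1r mulf_eq0 (negbTE pR_neq0) => /eqP.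
apply/seteqP; split; apply: zspan_sub; last first.
  move=> i; rewrite /B; case: ifP => _; first exact: (zspan_gen _ None).
  exact: (zspan_gen _ (Some i)).
case=> [i|]; last exact: (zspan_gen B ord0).
have [{i}->|i0] := eqVneq i ord0; last first.
  have -> : gens (Some i) = B i by rewrite /B (negbTE i0).
  exact: zspan_gen.
have -> : gens (Some ord0) = B ord0 *~ p - \sum_(i | i != ord0) B i *~ a i.
  have := sum_scale_Wv (fun i => (a i)%:R).
  rewrite (bigD1 ord0) //= a0 scale1r => /(canRL (addrK _)) ->.
  congr (_ - _); first by rewrite -scaler_int.
  by apply: eq_bigr => i /negbTE i0; rewrite /B i0 -scaler_int.
apply/zspanD; first exact/zspanMz/zspan_gen.
by apply/zspanN/zspan_sum => i _; apply/zspanMz/zspan_gen.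
Qed.

End Wv.

Lemma uvec_lift n (sigma : 'I_n -> nat) k : @uvec n.+1 sigma (lift ord0 k) = sigma k.
Proof. by rewrite /uvec /= valK. Qed.

Lemma lqsum_uvec (R : realType) q n (sigma : 'I_n -> nat) :
  lqsum q (\row_i (@uvec n.+1 sigma i)%:R : 'rV[R]_n.+1)
    = (1 + \sum_k sigma k ^ q)%N%:R.
Proof.
rewrite /lqsum big_ord_recl natrD natr_sum !mxE normr1 expr1n; congr (_ + _).
by apply: eq_bigr => k _; rewrite !mxE uvec_lift normr_nat natrX.
Qed.

Section TiltMx.
Variables (R : realType) (p n : nat) (eps : R).

Definition tilt_shift (i : 'I_n) : R := if (i : nat) == 0%N then eps else 2 * eps.

Definition tilt_mx : 'M[R]_(n, n + 1) := graph_mx (p%:R^-1 *: \col_i tilt_shift i).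

Hypothesis p_gt0 : (0 < p)%N.

Lemma ext_Wv_tilt_mx i : ext (Wv R p i) (tilt_shift i) = Wv R p i *m tilt_mx.
Proof.
rewrite /tilt_mx mul_graph_mx /ext /Wv -scalemxAr -scalemxAl scalerA.
rewrite mulVf ?pnatr_eq0 -?lt0n // scale1r -rowE.
by congr row_mx; apply/rowP => j; rewrite !mxE.
Qed.

Lemma lqsum_row_tilt_mx q (a : 'I_n -> R) :
  lqsum q ((\row_i a i) *m tilt_mx) =
    lqsum q (\row_i a i) + `|p%:R^-1 * \sum_i a i * tilt_shift i| ^+ q.
Proof.
rewrite lqsum_graph_mx -scalemxAr !mxE; congr (_ + `|_ * _| ^+ _).
by apply: eq_bigr => i _; rewrite !mxE.
Qed.

End TiltMx.

Lemma sum_uvec_tilt_shift (R : realType) n (sigma : 'I_n -> nat) (eps : R) :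
  \sum_(i < n.+1) (@uvec n.+1 sigma i)%:R * tilt_shift eps i
    = eps * (1 + 2 * \sum_k sigma k)%N%:R.
Proof.
rewrite big_ord_recl natrD natrM natr_sum /tilt_shift /= mul1r mulrDr mulr1 !mulr_sumr.
by congr (_ + _); apply: eq_bigr => k _; rewrite uvec_lift; ring.
Qed.

Lemma lqsum_uvec_tilt_mx (R : realType) q p n (sigma : 'I_n -> nat) (eps : R) :
  (0 < p)%N -> 0 <= eps -> (\sum_(k < n) sigma k ^ q = p ^ q - 1)%N ->
  lqsum q ((\row_i (@uvec n.+1 sigma i)%:R) *m tilt_mx p n.+1 eps)
    = p%:R ^+ q + (eps * (1 + 2 * \sum_k sigma k)%N%:R / p%:R) ^+ q.
Proof.
move=> p_gt0 eps_ge0 sum_sigma.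
rewrite lqsum_row_tilt_mx lqsum_uvec sum_sigma subnKC ?expn_gt0 ?p_gt0 // natrX.
rewrite sum_uvec_tilt_shift ger0_norm; first by rewrite mulrC.
by rewrite mulr_ge0 ?invr_ge0 ?mulr_ge0 ?ler0n.
Qed.

Lemma tilt_weight_bounds q p n (sigma : 'I_n -> nat) :
  (0 < q)%N -> (7 <= p)%N -> (forall i, sigma i = 2%N \/ sigma i = 3%N) ->
  (\sum_(k < n) sigma k ^ q = p ^ q - 1)%N -> ((2 <= q)%N -> (2 * p < 4 * n.+1 - 3)%N) ->
  (p < 1 + 2 * \sum_(k < n) sigma k <= (n * p.-1).+1)%N.
Proof.
move=> q_gt0 p_ge7 sigma23 sum_sigma q_ge2.
have sum_ge : (\sum_(k < n) 2 <= \sum_(k < n) sigma k)%N.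
  by apply: leq_sum => k _; case: (sigma23 k) => ->.
have sum_le : (\sum_(k < n) sigma k <= \sum_(k < n) 3)%N.
  by apply: leq_sum => k _; case: (sigma23 k) => ->.
rewrite sum_nat_const card_ord in sum_ge; rewrite sum_nat_const card_ord in sum_le.
apply/andP; split; last first.
  have : (6 * n <= n * p.-1)%N by nia.
  by lia.
have [/q_ge2|q_le1] := ltnP 1 q; first by lia.
have q1 : q = 1%N by lia.
move: sum_sigma; rewrite q1 expn1; under eq_bigr do rewrite expn1.
by lia.
Qed.

Lemma tilt_norm_bounds (R : realType) q (p K N : nat) (r eps : R) :
  (0 < q)%N -> (0 < p)%N -> 0 < eps -> eps < (r - p%:R) / 2 ->
  eps ^+ q < p%:R ^+ q * (r ^+ q - p%:R ^+ q) / N%:R ^+ q -> (p < K <= N)%N ->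
  [/\ p%:R ^+ q + (2 * eps) ^+ q < r ^+ q, eps < eps * K%:R / p%:R
    & p%:R ^+ q + (eps * K%:R / p%:R) ^+ q < r ^+ q].
Proof.
move=> q_gt0 p_gt0 eps_gt0 eps_lt eps_q /andP[p_lt_K K_le_N].
set a : R := p%:R; have a_gt0 : 0 < a by rewrite ltr0n.
have a_lt_K : a < K%:R by rewrite ltr_nat.
have K_le_N' : K%:R <= N%:R :> R by rewrite ler_nat.
split.
- apply: le_lt_trans (addXn_le_exprD q_gt0 (ltW a_gt0) _) _; first lra.
  by rewrite ltrXn2r -?lt0n //; lra.
- by rewrite ltr_pdivlMr // ltr_pM2l.
have kN : (eps * K%:R / a) ^+ q <= (eps * N%:R / a) ^+ q.
  by rewrite lerXn2r ?nnegrE ?divr_ge0 ?mulr_ge0 ?ler_pM2r ?ler_pM2l ?invr_gt0 // ltW.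
suff : (eps * N%:R / a) ^+ q < r ^+ q - a ^+ q by lra.
rewrite !exprMn exprVn ltr_pdivrMr ?exprn_gt0 // mulrC -ltr_pdivlMl ?exprn_gt0 //.
  by rewrite mulrC [_ * a ^+ q]mulrC.
by rewrite ltr0n; lia.
Qed.

Unset Implicit Arguments. Set Strict Implicit.

Theorem lemma4p6 (R : realType) (q p n : nat) (sigma : 'I_n.-1 -> nat)
  (Rad eps : R) :
  (0 < q)%N -> prime p -> (7 <= p)%N -> (2 <= n)%N ->
  (forall i, sigma i = 2%N \/ sigma i = 3%N) ->
  (\sum_(i < n.-1) sigma i ^ q = p ^ q - 1)%N ->
  (forall k : int,
     (k != 0 %[mod p%:Z])%Z -> (k != 1 %[mod p%:Z])%Z -> (k != -1 %[mod p%:Z])%Z ->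
     lqnorm_modp q p (fun i => (k * (sigma i)%:Z)%:~R : R)
       > lqnorm_modp q p (fun i => (sigma i)%:R : R)) ->
  ((2 <= q)%N -> (2 * p < 4 * n - 3)%N) ->
  p%:R < Rad ->
  (let u : 'rV[R]_n := \row_i (uvec sigma i)%:R in
   let gens : option 'I_n -> 'rV[R]_n :=
     fun o => if o is Some i then Wv R p i else u in
   zspan gens `&` ballq q Rad =
     [set 0] `|` [set x | exists i, x = Wv R p i \/ x = - Wv R p i]
             `|` [set u; - u]) ->
  0 < eps -> eps < (Rad - p%:R) / 2 ->
  eps ^+ q < p%:R ^+ q * (Rad ^+ q - p%:R ^+ q)
               / (((n.-1 * p.-1).+1)%:R) ^+ q ->
  let v : 'I_n -> 'rV[R]_(n + 1) :=
    fun i => ext (Wv R p i) (if (i : nat) == 0%N then eps else 2 * eps) in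
  let ut : 'rV[R]_(n + 1) :=
    p%:R^-1 *: \sum_(i < n) (uvec sigma i)%:R *: v i in
  let Lt : set 'rV[R]_(n + 1) :=
    zspan (fun o : option 'I_n => if o is Some i then v i else ut) in
  let S : set 'rV[R]_(n + 1) :=
    [set 0] `|` [set x | exists i, x = v i \/ x = - v i] `|` [set ut; - ut] in
  forall i0 : 'I_n, (i0 : nat) = 0%N ->
  [/\ lattice_of_rank Lt n,
      Lt `&` ballq q Rad = S &
      [set x | Lt x /\ x != 0 /\
               forall y, Lt y -> y != 0 -> lqnorm q x <= lqnorm q y]
        = [set v i0; - v i0]].
Proof.
(* The condition on [k sigma mod p] is only needed for the assumed description
   of [L_+ `&` B_q(Rad)], so it is not used here. *)
move=> q_gt0 p_prime p_ge7; case: n sigma => [//|n] sigma _ sigma23 sum_sigma _ q_ge2.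
move=> p_lt_Rad L_ball eps_gt0 eps_lt eps_q v ut Lt S i0 i0_eq0.
have p_gt0 := prime_gt0 p_prime.
have Rad_gt0 : 0 < Rad by apply: lt_trans p_lt_Rad; rewrite ltr0n.
pose u : 'rV[R]_n.+1 := \row_i (uvec sigma i)%:R.
pose gens o : 'rV[R]_n.+1 := if o is Some i then Wv R p i else u.
have {}L_ball : zspan gens `&` ballq q Rad = sym_gens (Wv R p) u := L_ball.
pose A := tilt_mx p n.+1 eps.
have vA i : v i = Wv R p i *m A by apply: ext_Wv_tilt_mx.
have utA : ut = u *m A.
  by rewrite /ut (eq_bigr _ (fun i _ => congr1 _ (vA i))) scale_sum_Wv_mulmx.
have LtA : Lt = (mulmx^~ A) @` zspan gens.
  by rewrite -zspan_mulmx; congr zspan; apply/funext => -[i|].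
have [v_lt_Rad eps_lt_s ut_lt_Rad] := tilt_norm_bounds q_gt0 p_gt0 eps_gt0 eps_lt eps_q
  (tilt_weight_bounds q_gt0 p_ge7 sigma23 sum_sigma q_ge2).
have lqsum_v i : lqsum q (v i) = p%:R ^+ q + `|tilt_shift eps i| ^+ q.
  by rewrite /v lqsum_ext lqsum_Wv.
have lqsum_ut : lqsum q ut = p%:R ^+ q + (eps * (1 + 2 * \sum_k sigma k)%N%:R / p%:R) ^+ q.
  by rewrite utA lqsum_uvec_tilt_mx // ltW.
have LtS : Lt `&` ballq q Rad = S.
  have -> : S = sym_gens (fun i => Wv R p i *m A) (u *m A) by rewrite -utA -(funext vA).
  rewrite LtA; apply: graph_mx_sym_gens_ballq => //; rewrite -[graph_mx _]/A.
    move=> i; rewrite -vA lqsum_v; apply: le_lt_trans v_lt_Rad.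
    rewrite lerD2l lerXn2r ?nnegrE //; first lra.
    by rewrite /tilt_shift; case: ifP => _; rewrite ger0_norm; lra.
  by rewrite -utA lqsum_ut.
split => //.
  rewrite LtA; apply: lattice_of_rank_mulmx; first exact: graph_mx_inj.
  exact: lattice_of_rank_Wv.
have shift_i0 : tilt_shift eps i0 = eps by rewrite /tilt_shift i0_eq0.
apply: (sym_gens_shortest (f := v) (g := ut) LtS).
- have v0_pos : 0 < lqsum q (v i0).
    by rewrite lqsum_v ltr_wpDr ?exprn_ge0 ?exprn_gt0 ?ltr0n.
  by apply: contraTneq v0_pos => ->; rewrite lqsum0 // ltxx.
- move=> i vi_neq; rewrite lqnorm_lt // !lqsum_v shift_i0 ltrD2l.
  have i_neq0 : (i : nat) != 0%N.
    apply: contraNneq vi_neq => i_eq0.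
    by have -> // : i = i0 by apply: val_inj; rewrite /= i_eq0 i0_eq0.
  by rewrite /tilt_shift (negbTE i_neq0) !gtr0_norm ?ltrXn2r -?lt0n ?ltW //; lra.
by rewrite lqnorm_lt // lqsum_ut lqsum_v shift_i0 ltrD2l gtr0_norm // ltrXn2r -?lt0n // ltW.
Qed.
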